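(* Let $Z$ be a real random variable with $|Z|\le L$ almost surely, where $L\ge1$. Then $$\big|\tanh(\mathbb EZ)-\mathbb E\tanh(Z)\big|\le20L\cdot\mathbb E\big|\tanh(Z)-\mathbb E\tanh(Z)\big|.$$ *)

From Stdlib Require Import Reals.
Open Scope R_scope.

(* The law of a real random variable Z with |Z| <= L a.s. is a Borel
   probability measure mu on [-L, L].  Since mathcomp-analysis / measure
   theory is not available, we represent it (Riesz representation) by its
   expectation functional  E f = E[f(Z)] = \int f dmu,  on continuous f:
   a linear, positive (w.r.t. values on [-L,L]) and normalized functional.
   Every such Z yields such an E, and conversely every such E is the
   expectation functional of some Z with |Z| <= L a.s. *)
Record is_bounded_expectation (L : R) (E : (R -> R) -> R) : Prop := {
  bexp_linear : forall (f g : R -> R) (a b : R),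
      continuity f -> continuity g ->
      E (fun x => a * f x + b * g x) = a * E f + b * E g;
  bexp_pos : forall f : R -> R, continuity f ->
      (forall x, - L <= x <= L -> 0 <= f x) -> 0 <= E f;
  bexp_one : E (fun _ => 1) = 1
}.

(* Reflecting Z to -Z, we may assume m := E Z >= 0, and we prove the bound
   with 4 in place of 20.  Write t := E tanh(Z) and D := E|tanh Z - t|.
   Each case exhibits an affine combination phi(z) of z, tanh z and 1 whose
   expectation dominates the gap, together with the pointwise bound
   phi(z) <= c L |tanh z - t| on [-L, L]:
   - if tanh m <= t, phi is tanh minus its tangent line at m;
   - if t <= 0 < tanh m, phi(z) = z - tanh z;
   - if 0 < t < tanh m, phi(z) = (1 - t^2) (z - a) with tanh a = t, the
     tangent line of tanh at a shifted by -t.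
   The pointwise bounds all come from the addition formula
     (tanh (x + d) - tanh x) (1 + tanh x tanh d) = (1 - tanh^2 x) tanh d
   combined with d/(1 + d) <= tanh d <= d for d >= 0, where 1 + d <= 3L
   because both points lie in [-L, L]. *)

From Stdlib Require Import Reals Lra Psatz FunctionalExtensionality.
From Coquelicot Require Import Rcomplements.
Open Scope R_scope.

Lemma cosh_pos x : 0 < cosh x.
Proof. unfold cosh. pose proof (exp_pos x). pose proof (exp_pos (- x)). lra. Qed.

Lemma tanh_0 : tanh 0 = 0.
Proof. unfold tanh. rewrite sinh_0. lra. Qed.

Lemma tanh_opp x : tanh (- x) = - tanh x.
Proof.
  unfold tanh, sinh, cosh. rewrite Ropp_involutive.
  pose proof (exp_pos x). pose proof (exp_pos (- x)). field. lra.
Qed.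

Lemma tanh_exp x : tanh x = (exp (2 * x) - 1) / (exp (2 * x) + 1).
Proof.
  unfold tanh, sinh, cosh. rewrite exp_Ropp.
  replace (2 * x) with (x + x) by ring. rewrite exp_plus.
  pose proof (exp_pos x). field. split; nra.
Qed.

Lemma tanh_bound x : -1 < tanh x < 1.
Proof.
  rewrite tanh_exp. pose proof (exp_pos (2 * x)) as HP.
  set (P := exp (2 * x)) in *.
  split; [apply Rlt_div_r | apply Rlt_div_l]; lra.
Qed.

Lemma tanh_add x y : tanh (x + y) = (tanh x + tanh y) / (1 + tanh x * tanh y).
Proof.
  rewrite !tanh_exp. replace (2 * (x + y)) with (2 * x + 2 * y) by ring.
  rewrite exp_plus. pose proof (exp_pos (2 * x)). pose proof (exp_pos (2 * y)).
  field. repeat split; nra.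
Qed.

Lemma tanh_add_sub x d :
  (tanh (x + d) - tanh x) * (1 + tanh x * tanh d) = (1 - tanh x ^ 2) * tanh d.
Proof.
  rewrite tanh_add. pose proof (tanh_bound x). pose proof (tanh_bound d).
  field. nra.
Qed.

Lemma tanh_lower_bound x : 0 <= x -> x <= (1 + x) * tanh x.
Proof.
  intros Hx. rewrite tanh_exp.
  pose proof (exp_ineq1_le (2 * x)). pose proof (exp_pos (2 * x)).
  set (P := exp (2 * x)) in *.
  replace ((1 + x) * ((P - 1) / (P + 1))) with ((1 + x) * (P - 1) / (P + 1))
    by (field; lra).
  apply Rle_div_r; nra.
Qed.

Lemma tanh_nonneg x : 0 <= x -> 0 <= tanh x.
Proof. intros Hx. pose proof (tanh_lower_bound x Hx). nra. Qed.

Lemma tanh_pos x : 0 < x -> 0 < tanh x.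
Proof. intros Hx. pose proof (tanh_lower_bound x (Rlt_le _ _ Hx)). nra. Qed.

Lemma tanh_increasing x y : x < y -> tanh x < tanh y.
Proof.
  intros Hxy. pose proof (tanh_add_sub x (y - x)) as Hadd.
  replace (x + (y - x)) with y in Hadd by ring.
  pose proof (tanh_pos (y - x) ltac:(lra)).
  pose proof (tanh_bound x). pose proof (tanh_bound (y - x)).
  assert (0 < 1 + tanh x * tanh (y - x)) by nra.
  assert (0 < (1 - tanh x ^ 2) * tanh (y - x)) by (apply Rmult_lt_0_compat; nra).
  nra.
Qed.

Lemma tanh_le_id x : 0 <= x -> tanh x <= x.
Proof.
  intros Hx. destruct (Req_dec x 0) as [-> | Hx0]; [rewrite tanh_0; lra |].
  set (f y := y * cosh y - sinh y).
  assert (Hf' : forall c, 0 <= c <= x ->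
            derivable_pt_lim f c ((1 * cosh c + c * sinh c) - cosh c)).
  { intros c _. apply (derivable_pt_lim_minus (fun y => y * cosh y) sinh).
    - apply (derivable_pt_lim_mult id cosh).
      + apply derivable_pt_lim_id.
      + apply derivable_pt_lim_cosh.
    - apply derivable_pt_lim_sinh. }
  destruct (MVT_cor2 f _ 0 x ltac:(lra) Hf') as [c [Hmvt Hc]].
  assert (Hsinh : 0 <= c * sinh c).
  { apply Rmult_le_pos; [lra |]. rewrite <- sinh_0. left. apply sinh_lt. lra. }
  assert (Hfx : 0 <= f x).
  { replace (f x) with (f x - f 0) by (unfold f; rewrite sinh_0; ring).
    rewrite Hmvt. nra. }
  unfold f, tanh in *. pose proof (cosh_pos x).
  apply Rle_div_l; lra.
Qed.

Lemma le_mul_tanh K d : 0 <= d -> 1 + d <= K -> d <= K * tanh d.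
Proof.
  intros Hd HK. pose proof (tanh_lower_bound d Hd). pose proof (tanh_nonneg d Hd).
  nra.
Qed.

Lemma tanh_right_le_tangent x d : 0 <= tanh x -> 0 <= d ->
  tanh (x + d) - tanh x <= (1 - tanh x ^ 2) * d.
Proof.
  intros Hx Hd. pose proof (tanh_add_sub x d) as Hadd.
  pose proof (tanh_bound x). pose proof (tanh_bound d).
  pose proof (tanh_nonneg d Hd). pose proof (tanh_le_id d Hd).
  set (T := tanh x) in *. set (u := tanh d) in *.
  assert (Hs : 0 <= 1 - T ^ 2) by nra.
  assert (0 <= (1 - T ^ 2) * u) by (apply Rmult_le_pos; lra).
  assert (0 < 1 + T * u) by nra.
  assert (Hgap : 0 <= tanh (x + d) - T) by nra.
  assert ((1 - T ^ 2) * u <= (1 - T ^ 2) * d) by (apply Rmult_le_compat_l; lra).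
  assert (0 <= (tanh (x + d) - T) * (T * u)) by (apply Rmult_le_pos; nra).
  nra.
Qed.

Lemma tanh_left_ge x d : 0 <= tanh x -> 0 <= d ->
  (1 - tanh x ^ 2) * tanh d <= tanh x - tanh (x - d).
Proof.
  intros Hx Hd. pose proof (tanh_add_sub x (- d)) as Hadd.
  rewrite tanh_opp in Hadd. replace (x + - d) with (x - d) in Hadd by ring.
  pose proof (tanh_bound x). pose proof (tanh_bound d). pose proof (tanh_nonneg d Hd).
  set (T := tanh x) in *. set (u := tanh d) in *.
  assert (Hs : 0 <= (1 - T ^ 2) * u) by (apply Rmult_le_pos; nra).
  assert (0 < 1 + T * - u) by nra.
  assert (Hgap : 0 <= T - tanh (x - d)) by nra.
  assert (0 <= (T - tanh (x - d)) * (T * u)) by (apply Rmult_le_pos; nra).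
  nra.
Qed.

Lemma tanh_right_ge_half x d : 0 <= d ->
  (1 - tanh x ^ 2) * tanh d <= 2 * (tanh (x + d) - tanh x).
Proof.
  intros Hd. pose proof (tanh_add_sub x d) as Hadd.
  pose proof (tanh_bound x). pose proof (tanh_bound d). pose proof (tanh_nonneg d Hd).
  set (T := tanh x) in *. set (u := tanh d) in *.
  assert (Hs : 0 <= (1 - T ^ 2) * u) by (apply Rmult_le_pos; nra).
  assert (0 < 1 + T * u) by nra.
  assert (Hgap : 0 <= tanh (x + d) - T) by nra.
  assert (T * u <= 1) by nra.
  assert (0 <= (tanh (x + d) - T) * (1 - T * u)) by (apply Rmult_le_pos; lra).
  nra.
Qed.

Lemma tanh_onto_nonneg t : 0 <= t < 1 -> exists a, 0 <= a /\ tanh a = t.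
Proof.
  intros Ht. set (q := (1 + t) / (1 - t)).
  assert (Hq : 0 < q) by (apply Rdiv_lt_0_compat; lra).
  assert (Hta : tanh (ln q / 2) = t).
  { rewrite tanh_exp. replace (2 * (ln q / 2)) with (ln q) by field.
    rewrite exp_ln by exact Hq. unfold q. field. lra. }
  exists (ln q / 2). split; [| exact Hta].
  destruct (Rle_lt_dec 0 (ln q / 2)) as [Hnonneg | Hneg]; [exact Hnonneg |].
  pose proof (tanh_increasing _ _ Hneg). rewrite tanh_0 in *. lra.
Qed.

Lemma tanh_sub_tangent_le_dev L m t z :
  1 <= L -> 0 <= m <= L -> tanh m <= t -> -L <= z <= L ->
  tanh z - tanh m - (1 - tanh m ^ 2) * (z - m) <= 3 * L * Rabs (tanh z - t).
Proof.
  intros hL Hm Ht Hz.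
  pose proof (tanh_nonneg m (proj1 Hm)) as HT. pose proof (tanh_bound m).
  assert (Hs : 0 <= 1 - tanh m ^ 2) by nra.
  assert (Hdev : 0 <= 3 * L * Rabs (tanh z - t))
    by (apply Rmult_le_pos; [lra | apply Rabs_pos]).
  destruct (Rle_lt_dec m z) as [Hmz | Hzm].
  - pose proof (tanh_right_le_tangent m (z - m) HT ltac:(lra)) as Hright.
    replace (m + (z - m)) with z in Hright by ring.
    lra.
  - pose proof (tanh_left_ge m (m - z) HT ltac:(lra)) as Hleft.
    replace (m - (m - z)) with z in Hleft by ring.
    pose proof (le_mul_tanh (3 * L) (m - z) ltac:(lra) ltac:(lra)) as Hd.
    assert (0 <= (1 - tanh m ^ 2) * tanh (m - z))
      by (apply Rmult_le_pos; [lra | apply tanh_nonneg; lra]).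
    assert (Hgap : tanh m - tanh z <= Rabs (tanh z - t)).
    { rewrite Rabs_minus_sym. pose proof (Rle_abs (t - tanh z)). lra. }
    assert ((1 - tanh m ^ 2) * (m - z) <= (1 - tanh m ^ 2) * (3 * L * tanh (m - z)))
      by (apply Rmult_le_compat_l; lra).
    assert (3 * L * (tanh m - tanh z) <= 3 * L * Rabs (tanh z - t))
      by (apply Rmult_le_compat_l; lra).
    assert (3 * L * ((1 - tanh m ^ 2) * tanh (m - z)) <= 3 * L * (tanh m - tanh z))
      by (apply Rmult_le_compat_l; lra).
    lra.
Qed.

Lemma id_sub_tanh_le_dev L t z :
  1 <= L -> t <= 0 -> z <= L -> z - tanh z <= 2 * L * Rabs (tanh z - t).
Proof.
  intros hL Ht Hz.
  assert (Hdev : 0 <= 2 * L * Rabs (tanh z - t))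
    by (apply Rmult_le_pos; [lra | apply Rabs_pos]).
  destruct (Rle_lt_dec z 0) as [Hneg | Hpos].
  - pose proof (tanh_le_id (- z) ltac:(lra)) as Hle. rewrite tanh_opp in Hle. lra.
  - pose proof (le_mul_tanh (2 * L) z ltac:(lra) ltac:(lra)).
    pose proof (tanh_nonneg z ltac:(lra)).
    pose proof (Rle_abs (tanh z - t)).
    assert (2 * L * tanh z <= 2 * L * Rabs (tanh z - t))
      by (apply Rmult_le_compat_l; lra).
    lra.
Qed.

Lemma tangent_sub_le_dev L a z :
  1 <= L -> 0 <= a -> z <= L ->
  (1 - tanh a ^ 2) * (z - a) <= 4 * L * Rabs (tanh z - tanh a).
Proof.
  intros hL Ha Hz. pose proof (tanh_bound a).
  assert (Hs : 0 <= 1 - tanh a ^ 2) by nra.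
  assert (Hdev : 0 <= 4 * L * Rabs (tanh z - tanh a))
    by (apply Rmult_le_pos; [lra | apply Rabs_pos]).
  destruct (Rle_lt_dec z a) as [Hza | Haz].
  - assert ((1 - tanh a ^ 2) * (z - a) <= 0) by (apply Rmult_le_0_l; lra). lra.
  - pose proof (tanh_right_ge_half a (z - a) ltac:(lra)) as Hhalf.
    replace (a + (z - a)) with z in Hhalf by ring.
    pose proof (le_mul_tanh (2 * L) (z - a) ltac:(lra) ltac:(lra)) as Hd.
    pose proof (Rle_abs (tanh z - tanh a)).
    assert ((1 - tanh a ^ 2) * (z - a) <= (1 - tanh a ^ 2) * (2 * L * tanh (z - a)))
      by (apply Rmult_le_compat_l; lra).
    assert (2 * L * ((1 - tanh a ^ 2) * tanh (z - a))
              <= 2 * L * (2 * Rabs (tanh z - tanh a)))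
      by (apply Rmult_le_compat_l; lra).
    lra.
Qed.

Lemma continuity_id_fun : continuity (fun z => z).
Proof. exact (derivable_continuous id derivable_id). Qed.

Lemma continuity_const_fun c : continuity (fun _ => c).
Proof. apply continuity_const. intros x y. reflexivity. Qed.

Lemma continuity_tanh : continuity tanh.
Proof.
  change (continuity (div_fct sinh cosh)). apply continuity_div.
  - exact (derivable_continuous sinh derivable_sinh).
  - exact (derivable_continuous cosh derivable_cosh).
  - intros x. pose proof (cosh_pos x). lra.
Qed.

Lemma continuity_lin f g a b :
  continuity f -> continuity g -> continuity (fun x => a * f x + b * g x).
Proof.
  intros Hf Hg.
  change (continuity (plus_fct (mult_real_fct a f) (mult_real_fct b g))).
  apply continuity_plus; apply continuity_scal; assumption.
Qed.

Lemma continuity_affine f g a b c :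
  continuity f -> continuity g -> continuity (fun x => a * f x + b * g x + c).
Proof.
  intros Hf Hg.
  change (continuity (plus_fct (fun x => a * f x + b * g x) (fct_cte c))).
  apply continuity_plus; [apply continuity_lin; assumption | apply continuity_const_fun].
Qed.

Lemma continuity_abs_tanh_sub t : continuity (fun z => Rabs (tanh z - t)).
Proof.
  change (continuity (comp Rabs (minus_fct tanh (fct_cte t)))).
  apply continuity_comp; [| exact Rcontinuity_abs].
  apply continuity_minus; [exact continuity_tanh | apply continuity_const_fun].
Qed.

Lemma continuity_comp_opp f : continuity f -> continuity (fun x => f (- x)).
Proof.
  intros Hf. change (continuity (comp f (opp_fct id))).
  apply continuity_comp; [| exact Hf].
  apply continuity_opp. exact continuity_id_fun.
Qed.

Definition reflect_expectation (E : (R -> R) -> R) (f : R -> R) : R :=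
  E (fun x => f (- x)).

Lemma reflect_is_bounded_expectation L E :
  is_bounded_expectation L E -> is_bounded_expectation L (reflect_expectation E).
Proof.
  intros hE. unfold reflect_expectation. constructor.
  - intros f g a b Hf Hg.
    apply (bexp_linear L E hE); apply continuity_comp_opp; assumption.
  - intros f Hf Hpos. apply (bexp_pos L E hE); [apply continuity_comp_opp; exact Hf |].
    intros x Hx. apply Hpos. lra.
  - apply (bexp_one L E hE).
Qed.

Section BoundedExpectation.

Variables (L : R) (E : (R -> R) -> R).
Hypothesis hE : is_bounded_expectation L E.

Local Notation mean := (E (fun z => z)).
Local Notation mean_tanh := (E tanh).
Local Notation dev := (E (fun z => Rabs (tanh z - E tanh))).

Lemma E_ext f g : (forall x, f x = g x) -> E f = E g.
Proof. intros Hfg. f_equal. apply functional_extensionality. exact Hfg. Qed.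

Lemma E_affine f g a b c : continuity f -> continuity g ->
  E (fun x => a * f x + b * g x + c) = a * E f + b * E g + c.
Proof.
  intros Hf Hg.
  rewrite (E_ext _ (fun x => 1 * (a * f x + b * g x) + c * 1)) by (intros x; ring).
  rewrite (bexp_linear L E hE (fun x => a * f x + b * g x) (fun _ => 1));
    [| apply continuity_lin; assumption | apply continuity_const_fun].
  rewrite (bexp_linear L E hE f g) by assumption.
  rewrite (bexp_one L E hE). ring.
Qed.

Lemma E_le f g : continuity f -> continuity g ->
  (forall x, - L <= x <= L -> f x <= g x) -> E f <= E g.
Proof.
  intros Hf Hg Hfg.
  assert (Hpos : 0 <= E (fun x => 1 * g x + (-1) * f x)).
  { apply (bexp_pos L E hE); [apply continuity_lin; assumption |].
    intros x Hx. specialize (Hfg x Hx). lra. }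
  rewrite (bexp_linear L E hE) in Hpos by assumption. lra.
Qed.

Lemma E_affine_le f g h a b c K :
  continuity f -> continuity g -> continuity h ->
  (forall x, - L <= x <= L -> a * f x + b * g x + c <= K * h x) ->
  a * E f + b * E g + c <= K * E h.
Proof.
  intros Hf Hg Hh Hpt. rewrite <- E_affine by assumption.
  apply Rle_trans with (E (fun x => K * h x + 0 * h x)).
  - apply E_le; [apply continuity_affine | apply continuity_lin | ]; try assumption.
    intros x Hx. specialize (Hpt x Hx). lra.
  - rewrite (bexp_linear L E hE) by assumption. lra.
Qed.

Lemma mean_le : mean <= L.
Proof.
  pose proof (E_affine_le (fun z => z) (fun z => z) (fun _ => 1) 1 0 0 L
    continuity_id_fun continuity_id_fun (continuity_const_fun 1)) as H.
  rewrite (bexp_one L E hE) in H.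
  assert (Hpt : forall x, - L <= x <= L -> 1 * x + 0 * x + 0 <= L * 1)
    by (intros x Hx; lra).
  specialize (H Hpt). lra.
Qed.

Lemma dev_nonneg t : 0 <= E (fun z => Rabs (tanh z - t)).
Proof.
  apply (bexp_pos L E hE); [apply continuity_abs_tanh_sub |].
  intros x _. apply Rabs_pos.
Qed.

Lemma reflect_expectation_id : reflect_expectation E (fun z => z) = - mean.
Proof.
  unfold reflect_expectation.
  rewrite (E_ext _ (fun x => -1 * x + 0 * x + 0)) by (intros x; ring).
  rewrite E_affine by exact continuity_id_fun. ring.
Qed.

Lemma reflect_expectation_tanh : reflect_expectation E tanh = - mean_tanh.
Proof.
  unfold reflect_expectation.
  rewrite (E_ext _ (fun x => -1 * tanh x + 0 * tanh x + 0))
    by (intros x; rewrite tanh_opp; ring).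
  rewrite E_affine by exact continuity_tanh. ring.
Qed.

Lemma reflect_expectation_dev :
  reflect_expectation E (fun z => Rabs (tanh z - reflect_expectation E tanh)) = dev.
Proof.
  rewrite reflect_expectation_tanh. unfold reflect_expectation.
  apply E_ext. intros x.
  rewrite tanh_opp, <- Rabs_Ropp. f_equal. ring.
Qed.

Hypothesis hL : 1 <= L.

Lemma mean_tanh_sub_tanh_mean_le (hm : 0 <= mean) :
  tanh mean <= mean_tanh -> mean_tanh - tanh mean <= 3 * L * dev.
Proof.
  intros Ht. set (s := 1 - tanh mean ^ 2).
  assert (Hpt : forall x, - L <= x <= L ->
            1 * tanh x + - s * x + (s * mean - tanh mean)
              <= 3 * L * Rabs (tanh x - mean_tanh)).
  { intros x Hx.
    pose proof (tanh_sub_tangent_le_dev L mean mean_tanh x hL (conj hm mean_le) Ht Hx).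
    unfold s. lra. }
  pose proof (E_affine_le tanh (fun z => z) _ 1 (- s) (s * mean - tanh mean) (3 * L)
    continuity_tanh continuity_id_fun (continuity_abs_tanh_sub _) Hpt).
  lra.
Qed.

Lemma tanh_mean_sub_mean_tanh_le_of_nonpos (hm : 0 <= mean) :
  mean_tanh <= 0 -> tanh mean - mean_tanh <= 2 * L * dev.
Proof.
  intros Ht.
  assert (Hpt : forall x, - L <= x <= L ->
            1 * x + -1 * tanh x + 0 <= 2 * L * Rabs (tanh x - mean_tanh)).
  { intros x Hx. pose proof (id_sub_tanh_le_dev L mean_tanh x hL Ht (proj2 Hx)). lra. }
  pose proof (E_affine_le (fun z => z) tanh _ 1 (-1) 0 (2 * L)
    continuity_id_fun continuity_tanh (continuity_abs_tanh_sub _) Hpt).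
  pose proof (tanh_le_id mean hm).
  lra.
Qed.

Lemma tanh_mean_sub_mean_tanh_le_of_nonneg :
  0 <= mean_tanh -> mean_tanh < tanh mean -> tanh mean - mean_tanh <= 4 * L * dev.
Proof.
  intros Ht0 Ht. pose proof (tanh_bound mean).
  destruct (tanh_onto_nonneg mean_tanh ltac:(lra)) as [a [Ha Hta]].
  set (s := 1 - mean_tanh ^ 2).
  assert (Ham : a <= mean).
  { destruct (Rle_lt_dec a mean) as [Hle | Hlt]; [exact Hle |].
    pose proof (tanh_increasing _ _ Hlt). lra. }
  assert (Hgap : tanh mean - mean_tanh <= s * (mean - a)).
  { pose proof (tanh_right_le_tangent a (mean - a) ltac:(lra) ltac:(lra)) as Hright.
    replace (a + (mean - a)) with mean in Hright by ring.
    rewrite Hta in Hright. exact Hright. }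
  assert (Hpt : forall x, - L <= x <= L ->
            s * x + 0 * x + - (s * a) <= 4 * L * Rabs (tanh x - mean_tanh)).
  { intros x Hx. pose proof (tangent_sub_le_dev L a x hL Ha (proj2 Hx)) as Hx'.
    rewrite Hta in Hx'. unfold s. lra. }
  pose proof (E_affine_le (fun z => z) (fun z => z) _ s 0 (- (s * a)) (4 * L)
    continuity_id_fun continuity_id_fun (continuity_abs_tanh_sub _) Hpt).
  lra.
Qed.

Lemma tanh_mean_gap_le_of_mean_nonneg (hm : 0 <= mean) :
  Rabs (tanh mean - mean_tanh) <= 4 * L * dev.
Proof.
  assert (HLdev : 0 <= L * dev) by (apply Rmult_le_pos; [lra | apply dev_nonneg]).
  apply Rabs_le.
  destruct (Rle_lt_dec (tanh mean) mean_tanh) as [Hle | Hlt].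
  - pose proof (mean_tanh_sub_tanh_mean_le hm Hle). lra.
  - destruct (Rle_lt_dec mean_tanh 0) as [Hnonpos | Hpos].
    + pose proof (tanh_mean_sub_mean_tanh_le_of_nonpos hm Hnonpos). lra.
    + pose proof (tanh_mean_sub_mean_tanh_le_of_nonneg (Rlt_le _ _ Hpos) Hlt). lra.
Qed.

End BoundedExpectation.

Lemma tanh_mean_gap_le L E : 1 <= L -> is_bounded_expectation L E ->
  Rabs (tanh (E (fun z => z)) - E tanh) <= 4 * L * E (fun z => Rabs (tanh z - E tanh)).
Proof.
  intros hL hE.
  destruct (Rle_lt_dec 0 (E (fun z => z))) as [hm | hm].
  - exact (tanh_mean_gap_le_of_mean_nonneg L E hE hL hm).
  - pose proof (reflect_is_bounded_expectation L E hE) as hE'.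
    pose proof (reflect_expectation_id L E hE) as Hmean.
    pose proof (tanh_mean_gap_le_of_mean_nonneg L _ hE' hL ltac:(lra)) as Hgap.
    rewrite Hmean, (reflect_expectation_dev L E hE), (reflect_expectation_tanh L E hE),
      tanh_opp, <- Rabs_Ropp in Hgap.
    replace (- (- tanh (E (fun z => z)) - - E tanh))
      with (tanh (E (fun z => z)) - E tanh) in Hgap by ring.
    exact Hgap.
Qed.

Theorem mainTheorem8 (L : R) (E : (R -> R) -> R)
  (hL : 1 <= L) (hE : is_bounded_expectation L E) :
  Rabs (tanh (E (fun z => z)) - E tanh)
    <= 20 * L * E (fun z => Rabs (tanh z - E tanh)).
Proof.
  pose proof (tanh_mean_gap_le L E hL hE) as Hgap.
  pose proof (Rabs_pos (tanh (E (fun z => z)) - E tanh)).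
  lra.
Qed.
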